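(* Let $(G,P)$ be a quasi-lattice ordered group and $\mathcal D$ the diagonal subalgebra of $\mathcal T(G,P)$. Then the commutant $\mathcal D'$ of $\mathcal D$ in $B(\ell^2(P))$ is contained in $\ell^\infty(P)$, i.e. every $M\in\mathcal D'$ is a multiplication operator $M_g$ for some $g\in\ell^\infty(P)$.
   Context: Quasi-lattice ordered group $(G,P)$: $G$ discrete, $P\subseteq G$ subsemigroup, $P\cap P^{-1}=\{e\}$, and for $x\le y\iff x^{-1}y\in P$ elements with a common upper bound in $P$ have a least one in $P$. On $\ell^2(P)$ with basis $\{\varepsilon_t\}_{t\in P}$, $T_s\varepsilon_t=\varepsilon_{st}$; $\mathcal T(G,P)$ is generated by the $T_s$, and $\mathcal D=\overline{\mathrm{span}}\{T_sT_s^*:s\in P\}$. $\ell^\infty(P)$ acts on $\ell^2(P)$ by multiplication operators $M_g\varepsilon_t=g(t)\varepsilon_t$. *)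

From mathcomp Require Import all_boot all_algebra.
From mathcomp Require Import all_classical all_reals all_analysis.
From mathcomp Require Import complex.
Import GRing.Theory Num.Theory.
Local Open Scope ring_scope.

Set Implicit Arguments.
Unset Strict Implicit.
Unset Printing Implicit Defensive.

Record group_on (G : Type) := GroupOn {
  gmul : G -> G -> G;
  ginv : G -> G;
  gone : G;
  gmulA : forall x y z, gmul x (gmul y z) = gmul (gmul x y) z;
  gmul1g : forall x, gmul gone x = x;
  gmulVg : forall x, gmul (ginv x) x = gone }.

Section QLO.
Variables (G : choiceType) (grp : group_on G) (P : set G).

Definition qle (x y : G) : Prop := P (gmul grp (ginv grp x) y).

Definition quasi_lattice_ordered : Prop :=
  [/\ (forall x y, P x -> P y -> P (gmul grp x y)),
      P (gone grp),
      (forall x, P x -> P (ginv grp x) -> x = gone grp)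
    & (forall x y, (exists z, P z /\ qle x z /\ qle y z) ->
         exists w, [/\ P w, qle x w, qle y w &
           forall z, P z -> qle x z -> qle y z -> qle w z])].
End QLO.

Section Hilbert.
Variables (R : realType) (G : choiceType) (grp : group_on G) (P : set G).

Local Notation C := (R[i]).
Local Notation vec := (G -> C).
Local Notation op := (vec -> vec).

Definition cabs (z : C) : R := Num.sqrt (complex.Re z ^+ 2 + complex.Im z ^+ 2).

Definition nrm2 (f : vec) : \bar R := (\esum_(t in P) ((cabs (f t)) ^+ 2)%:E)%E.

(** f \in l^2(P): f vanishes off P and is square summable over P
    (so l^2(P) is realised inside the functions G -> C). *)
Definition l2 (f : vec) : Prop :=
  (forall t, ~ P t -> f t = 0) /\ (nrm2 f < +oo)%E.

Definition bounded_op (A : op) : Prop :=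
  [/\ (forall f h, l2 f -> l2 h -> A (fun t => f t + h t) = (fun t => A f t + A h t)),
      (forall (c : C) f, l2 f -> A (fun t => c * f t) = (fun t => c * A f t))
    & exists k : R, forall f, l2 f -> l2 (A f) /\ (nrm2 (A f) <= k%:E * nrm2 f)%E].

(** isometry T_s : eps_t |-> eps_{st}, i.e. (T_s f)(x) = f(s^{-1} x) if s^{-1}x \in P *)
Definition Tshift (s : G) : op := fun f x =>
  if asbool (P (gmul grp (ginv grp s) x)) then f (gmul grp (ginv grp s) x) else 0.

Definition Tadj (s : G) : op := fun f x =>
  if asbool (P x) then f (gmul grp s x) else 0.

Definition rproj (s : G) : op := fun f => Tshift s (Tadj s f).

Definition dcomb (l : seq (C * G)) : op := fun f x =>
  \sum_(p <- l) p.1 * rproj p.2 f x.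

(** membership in D = closed linear span of {T_s T_s^* : s \in P}
    (closure in operator norm) *)
Definition in_diag (X : op) : Prop :=
  bounded_op X /\
  forall eps : R, 0 < eps -> exists l : seq (C * G),
    (forall p, p \in l -> P p.2) /\
    forall f, l2 f -> (nrm2 (fun t => (X f t - dcomb l f t)%R) <= eps%:E * nrm2 f)%E.

Definition in_commutant_diag (M : op) : Prop :=
  bounded_op M /\ forall X, in_diag X -> forall f, l2 f -> M (X f) = X (M f).

Definition is_mult_op (M : op) : Prop :=
  exists g : vec, (exists B : R, forall t, P t -> cabs (g t) <= B) /\
    forall f, l2 f -> M f = (fun t => g t * f t).

End Hilbert.

From mathcomp Require Import all_boot all_algebra.
From mathcomp Require Import all_classical all_reals all_analysis.
From mathcomp Require Import complex.
From mathcomp Require Import lra.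
Import mathcomp.order.order.Order.TTheory GRing.Theory Num.Theory.
Local Open Scope classical_set_scope.
Local Open Scope ring_scope.
Set Implicit Arguments.
Unset Strict Implicit.
Unset Printing Implicit Defensive.

(* The range projections T_s T_s^* (s in P) lie in D and act as multiplication
   by the indicator of sP, so M commutes with them. Fix t in P and x <> t. If
   t <= x fails, the projection onto tP fixes eps_t and kills the x-coordinate;
   if t <= x, the projection onto xP kills eps_t (by antisymmetry of <=) but
   keeps the x-coordinate. Either way (M eps_t)(x) = 0, so M is diagonal on
   finitely supported vectors; these are dense and M is bounded, hence
   (M f)(t) = g(t) f(t) with g(t) = (M eps_t)(t) and |g(t)|^2 <= |M|^2. Only the
   positive-cone axioms of (G,P) are used, not the lattice condition. *)

Section GroupFacts.
Variables (G : Type) (grp : group_on G).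

Lemma gmulgV x : gmul grp x (ginv grp x) = gone grp.
Proof.
set y := ginv grp x.
rewrite -[gmul grp x y](gmul1g grp) -{1}(gmulVg grp y) -gmulA.
by rewrite [gmul grp y (gmul grp x y)]gmulA gmulVg gmul1g gmulVg.
Qed.

Lemma gmulg1 x : gmul grp x (gone grp) = x.
Proof. by rewrite -(gmulVg grp x) gmulA gmulgV gmul1g. Qed.

Lemma gmulKV x y : gmul grp x (gmul grp (ginv grp x) y) = y.
Proof. by rewrite gmulA gmulgV gmul1g. Qed.

Lemma gmulK x y : gmul grp (ginv grp x) (gmul grp x y) = y.
Proof. by rewrite gmulA gmulVg gmul1g. Qed.

Lemma gmul_eq1_ginv x y : gmul grp x y = gone grp -> y = ginv grp x.
Proof. by move=> xy1; rewrite -(gmulK x y) xy1 gmulg1. Qed.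

Lemma ginv_mulVg x y : ginv grp (gmul grp (ginv grp x) y) = gmul grp (ginv grp y) x.
Proof. by apply/esym/gmul_eq1_ginv; rewrite -gmulA gmulKV gmulVg. Qed.

End GroupFacts.

Section PositiveCone.
Variables (G : choiceType) (grp : group_on G) (P : set G).

Lemma qle_refl x : P (gone grp) -> qle grp P x x.
Proof. by rewrite /qle gmulVg. Qed.

Lemma qle_anti x y : (forall z, P z -> P (ginv grp z) -> z = gone grp) ->
  qle grp P x y -> qle grp P y x -> x = y.
Proof.
move=> P_anti xy yx; rewrite -[y](gmulKV grp x) (P_anti _ xy) ?gmulg1 //.
by rewrite ginv_mulVg.
Qed.

Lemma qle_P x y : (forall u v, P u -> P v -> P (gmul grp u v)) ->
  P x -> qle grp P x y -> P y.
Proof. by move=> P_mul Px xy; rewrite -(gmulKV grp x y); apply: P_mul. Qed.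

End PositiveCone.

Section ComplexModulus.
Variable R : realType.

Lemma cabs0 : cabs (0 : R[i]) = 0.
Proof. by rewrite /cabs /= expr0n /= addr0 sqrtr0. Qed.

Lemma cabs_ge0 (z : R[i]) : 0 <= cabs z.
Proof. exact: sqrtr_ge0. Qed.

Lemma cabs_eq0 (z : R[i]) : cabs z = 0 -> z = 0.
Proof. by move=> z0; apply/normr0_eq0; rewrite normc_def -/(cabs z) z0. Qed.

End ComplexModulus.

Section SquareSummable.
Variables (R : realType) (G : choiceType) (P : set G).
Implicit Types (f u : G -> R[i]) (q : pred G).

Definition restr q f : G -> R[i] := fun x => if q x then f x else 0.

Definition basis_vec (t : G) : G -> R[i] := fun x => if x == t then 1 else 0.

Lemma restrUC q f : f = (fun x => restr q f x + restr (fun y => ~~ q y) f x).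
Proof.
by apply/funext => x; rewrite /restr; case: (q x); rewrite ?addr0 ?add0r.
Qed.

Lemma restr_cons a s f : restr (fun x => x \in a :: s) f =
  (fun x => restr (fun y => y == a) f x
            + restr (fun y => y \in s) (restr (fun y => y != a) f) x).
Proof.
apply/funext => x; rewrite /restr inE.
by case: (eqVneq x a) => [->|] /=; case: (_ \in s); rewrite ?addr0 ?add0r.
Qed.

Lemma restr_eq1 t f : restr (fun x => x == t) f = (fun x => f t * basis_vec t x).
Proof.
apply/funext => x; rewrite /restr /basis_vec.
by case: eqP => [->|]; rewrite ?mulr1 ?mulr0.
Qed.

Lemma nrm2_ge0 f : (0 <= nrm2 P f)%E.
Proof. by apply: esum_ge0 => x _; rewrite lee_fin sqr_ge0. Qed.

Lemma nrm2_cst0 : nrm2 P (fun _ => 0 : R[i]) = 0%E.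
Proof. by apply: esum1 => x _; rewrite cabs0 expr0n. Qed.

Lemma l2_cst0 : l2 P (fun _ => 0 : R[i]).
Proof. by split=> //; rewrite nrm2_cst0 ltry. Qed.

Lemma nrm2_restr_le q f : (nrm2 P (restr q f) <= nrm2 P f)%E.
Proof.
apply: le_esum => x _; rewrite lee_fin /restr; case: (q x) => //.
by rewrite cabs0 expr0n sqr_ge0.
Qed.

Lemma l2_restr q f : l2 P f -> l2 P (restr q f).
Proof.
move=> [f0 f_fin]; split; last exact: le_lt_trans (nrm2_restr_le q f) f_fin.
by move=> t Pt; rewrite /restr f0 //; case: (q t).
Qed.

Lemma l2_nrm2_fin f : l2 P f -> nrm2 P f \is a fin_num.
Proof. by move=> [_ f_fin]; rewrite ge0_fin_numE // nrm2_ge0. Qed.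

Lemma cabs_le_nrm2 f t : P t -> ((cabs (f t) ^+ 2)%:E <= nrm2 P f)%E.
Proof.
move=> Pt; apply: esum_ge; exists [set t]; last by rewrite fsbig_set1.
by split; [exact: finite_set1 | move=> x ->].
Qed.

Lemma nrm2_basis t : P t -> nrm2 P (basis_vec t) = 1%E.
Proof.
move=> Pt; rewrite /nrm2 (esumID [set t]); last by move=> x _; rewrite lee_fin sqr_ge0.
have -> : P `&` [set t] = [set t] by apply/seteqP; split=> x /= => [[]|->].
rewrite esum_set1 ?lee_fin ?sqr_ge0 // esum1 ?adde0.
  by rewrite /basis_vec eqxx /cabs /= expr0n /= addr0 expr1n sqrtr1 expr1n.
by move=> x [_ /eqP xt]; rewrite /basis_vec (negbTE xt) cabs0 expr0n.
Qed.

Lemma l2_basis t : P t -> l2 P (basis_vec t).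
Proof.
move=> Pt; split; last by rewrite nrm2_basis // ltry.
by move=> x Px; rewrite /basis_vec; case: eqP => // xt; rewrite xt in Px.
Qed.

Lemma l2_tail f eps : l2 P f -> 0 < eps ->
  exists s : seq G, (nrm2 P (restr (fun x => x \notin s) f) <= eps%:E)%E.
Proof.
move=> hf eps0; set a := fun x => ((cabs (f x)) ^+ 2)%:E.
have a0 x : (0 <= a x)%E by rewrite lee_fin sqr_ge0.
have [_ [A [finA AP] <-] headA] := ub_ereal_sup_adherent eps0 (l2_nrm2_fin hf).
have [s As] := iffLR (finite_seqP A) finA; exists s; subst A.
have split_f := esumID [set` s] P a (fun x _ => a0 x).
have -> : nrm2 P (restr (fun x => x \notin s) f) = \esum_(x in P `&` ~` [set` s]) a x.
  rewrite /nrm2 (esumID [set` s]); last by move=> x _; rewrite lee_fin sqr_ge0.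
  rewrite esum1 ?add0e; first by apply: eq_esum => x [_ /= /negP xs]; rewrite /restr xs.
  by move=> x [_ /= xs]; rewrite /restr xs cabs0 expr0n.
have head_le : (\sum_(x \in [set` s]) a x <= \esum_(x in P `&` [set` s]) a x)%E.
  by apply: esum_ge; exists [set` s] => //; split=> // x sx; split; [exact: AP|].
have headA' : (\esum_(x in P) a x - eps%:E < \sum_(x \in [set` s]) a x)%E := headA.
have : \esum_(x in P) a x \is a fin_num := l2_nrm2_fin hf.
rewrite split_f in headA' *; rewrite fin_numD => /andP[hfin tfin].
have := lt_le_trans headA' head_le.
by rewrite -(fineK hfin) -(fineK tfin) -EFinD lte_fin lee_fin; lra.
Qed.

End SquareSummable.

Arguments basis_vec {R G} t.

Section RangeProjections.
Variables (R : realType) (G : choiceType) (grp : group_on G) (P : set G).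

Lemma rprojE s (f : G -> R[i]) :
  rproj grp P s f = restr (fun x => `[< qle grp P s x >]) f.
Proof.
apply/funext => x; rewrite /rproj /Tshift /Tadj /restr /qle.
by case: asboolP => // _; rewrite gmulKV.
Qed.

Lemma rproj_in_diag s : P s -> @in_diag R G grp P (rproj grp P s).
Proof.
move=> Ps; split.
  split=> [f h _ _|c f _|].
  - by rewrite !rprojE; apply/funext => x; rewrite /restr; case: ifP; rewrite ?addr0.
  - by rewrite !rprojE; apply/funext => x; rewrite /restr; case: ifP; rewrite ?mulr0.
  - exists 1 => f hf; rewrite rprojE mul1e.
    by split; [exact: l2_restr | exact: nrm2_restr_le].
move=> eps eps0; exists [:: (1, s)]; split=> [p|f _]; first by rewrite inE => /eqP ->.
have -> : (fun t => rproj grp P s f t - dcomb grp P [:: (1, s)] f t) = fun _ => 0.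
  by apply/funext => t; rewrite /dcomb big_seq1 mul1r subrr.
by rewrite nrm2_cst0 mule_ge0 ?nrm2_ge0 // lee_fin ltW.
Qed.

End RangeProjections.

Section Commutant.
Variables (R : realType) (G : choiceType) (grp : group_on G) (P : set G).
Hypotheses (P_mul : forall x y, P x -> P y -> P (gmul grp x y)) (P1 : P (gone grp))
  (P_anti : forall x, P x -> P (ginv grp x) -> x = gone grp).
Variables (M : (G -> R[i]) -> G -> R[i]) (k : R).
Hypotheses
  (M_add : forall f h, l2 P f -> l2 P h ->
     M (fun t => f t + h t) = (fun t => M f t + M h t))
  (M_scale : forall (c : R[i]) f, l2 P f -> M (fun t => c * f t) = (fun t => c * M f t))
  (M_bounded : forall f, l2 P f -> l2 P (M f) /\ (nrm2 P (M f) <= k%:E * nrm2 P f)%E)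
  (M_rproj : forall s, P s -> forall f, l2 P f ->
     M (rproj grp P s f) = rproj grp P s (M f)).

Lemma M_cst0 : M (fun _ => 0) = (fun _ => 0).
Proof.
transitivity (M (fun _ => 0 * 0)); first by congr M; apply/funext => x; rewrite mulr0.
by rewrite M_scale; [apply/funext => x; rewrite mul0r | exact: l2_cst0].
Qed.

Lemma cabs_M_le f t : l2 P f -> P t ->
  ((cabs (M f t) ^+ 2)%:E <= `|k|%:E * nrm2 P f)%E.
Proof.
move=> hf Pt; apply: le_trans (cabs_le_nrm2 (M f) Pt) _.
apply: le_trans (M_bounded hf).2 _.
by rewrite lee_wpmul2r ?nrm2_ge0 // lee_fin ler_norm.
Qed.

Lemma M_basis_offdiag t x : P t -> x != t -> M (basis_vec t) x = 0.
Proof.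
move=> Pt xt; have bt := l2_basis R Pt.
have [tx|ntx] := pselect (qle grp P t x).
- have e_killed :
      restr (fun y => `[< qle grp P x y >]) (basis_vec t) = fun _ => 0 : R[i].
    apply/funext => y; rewrite /restr /basis_vec; case: asboolP => // xy.
    case: eqP => // yt; subst y; case/negP: xt; apply/eqP.
    exact: qle_anti P_anti xy tx.
  have := congr1 (fun f => f x) (M_rproj (qle_P P_mul Pt tx) bt).
  by rewrite !rprojE e_killed M_cst0 /= /restr (asboolT (qle_refl x P1)) => ->.
- have e_fixed :
      restr (fun y => `[< qle grp P t y >]) (basis_vec t) = basis_vec t :> (G -> R[i]).
    apply/funext => y; rewrite /restr /basis_vec.
    case: eqP => [->|]; last by case: ifP.
    by rewrite asboolT //; exact: qle_refl.
  have := congr1 (fun f => f x) (M_rproj Pt bt).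
  by rewrite !rprojE e_fixed /= => ->; rewrite /restr asboolF.
Qed.

Lemma M_restr1_vanish t a u : P t -> l2 P u -> u t = 0 ->
  M (restr (fun x => x == a) u) t = 0.
Proof.
move=> Pt hu ut; have [Pa|nPa] := pselect (P a); last first.
  have -> : restr (fun x => x == a) u = fun _ => 0.
    by apply/funext => x; rewrite /restr; case: eqP => // ->; exact: hu.1.
  by rewrite M_cst0.
rewrite restr_eq1 M_scale; last exact: (l2_basis R Pa).
have [->|at_] := eqVneq a t; first by rewrite ut mul0r.
by rewrite M_basis_offdiag ?mulr0 // eq_sym.
Qed.

Lemma M_restr_seq_vanish t (s : seq G) u : P t -> l2 P u -> u t = 0 ->
  M (restr (fun x => x \in s) u) t = 0.
Proof.
move=> Pt; elim: s u => [|a s IH] u hu ut.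
  by have -> : restr (fun x => x \in [::]) u = fun _ => 0; rewrite ?M_cst0.
have hua := l2_restr (fun x => x != a) hu.
rewrite restr_cons (M_add (l2_restr _ hu) (l2_restr _ hua)) /=.
by rewrite M_restr1_vanish // IH // ?addr0 // /restr ut; case: (t != a).
Qed.

Lemma M_vanish t u : P t -> l2 P u -> u t = 0 -> M u t = 0.
Proof.
move=> Pt hu ut; apply: cabs_eq0.
suff c0 : cabs (M u t) ^+ 2 = 0 by move/eqP: c0; rewrite sqrf_eq0 => /eqP.
apply/le_anti; rewrite sqr_ge0 andbT; apply/ler_addgt0Pr => eps eps0; rewrite add0r.
have k1_gt0 : 0 < `|k| + 1 by rewrite ltr_pwDr.
have [s tail_s] := l2_tail hu (divr_gt0 eps0 k1_gt0).
set v := restr (fun x => x \notin s) u in tail_s.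
have hv : l2 P v by exact: l2_restr.
have Mu_v : M u t = M v t.
  rewrite {1}(restrUC (fun x => x \in s) u) M_add; try exact: l2_restr.
  by rewrite /= (M_restr_seq_vanish s Pt hu ut) add0r.
have := cabs_M_le hv Pt; rewrite -Mu_v.
have vfin := l2_nrm2_fin hv; rewrite -(fineK vfin) lee_fin in tail_s *.
rewrite -EFinM lee_fin => Mu_le.
have v0 : 0 <= fine (nrm2 P v) by rewrite fine_ge0 ?nrm2_ge0.
have epsE : eps / (`|k| + 1) * (`|k| + 1) = eps by rewrite divfK ?gt_eqF.
have := normr_ge0 k; nra.
Qed.

Lemma M_multE t f : P t -> l2 P f -> M f t = M (basis_vec t) t * f t.
Proof.
move=> Pt hf; have hf' := l2_restr (fun x => ~~ (x == t)) hf.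
rewrite {1}(restrUC (fun x => x == t) f) M_add; try exact: l2_restr.
rewrite /= (M_vanish Pt hf') ?addr0; last by rewrite /restr eqxx.
rewrite restr_eq1 M_scale; last exact: (l2_basis R Pt).
by rewrite mulrC.
Qed.

Lemma cabs_M_basis_le t : P t -> cabs (M (basis_vec t) t) <= Num.sqrt `|k|.
Proof.
move=> Pt; have := cabs_M_le (l2_basis R Pt) Pt; rewrite nrm2_basis // mule1 lee_fin.
by move/ler_wsqrtr; rewrite sqrtr_sqr ger0_norm ?cabs_ge0.
Qed.

End Commutant.

Theorem lemma6p11 (R : realType) (G : choiceType) (grp : group_on G) (P : set G)
  (hP : quasi_lattice_ordered grp P) (M : (G -> R[i]) -> (G -> R[i])) :
  in_commutant_diag grp P M -> is_mult_op P M.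
Proof.
move=> [[M_add M_scale [k M_bounded]] M_comm]; case: hP => P_mul P1 P_anti _.
have M_rproj s (Ps : P s) f (hf : l2 P f) := M_comm _ (rproj_in_diag R grp Ps) f hf.
exists (fun t => M (basis_vec t) t); split.
  by exists (Num.sqrt `|k|) => t Pt; exact: (cabs_M_basis_le M_bounded Pt).
move=> f hf; apply/funext => t; have [Pt|nPt] := pselect (P t).
  exact: (M_multE P_mul P1 P_anti M_add M_scale M_bounded M_rproj Pt hf).
by rewrite hf.1 // mulr0 (M_bounded _ hf).1.1.
Qed.
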